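(* For every order $N\in\mathbb N_{\ge3}$ and mode dimensions $D_1,\dots,D_N\in\mathbb N_{\ge2}$, there exist a ground truth $\mathcal W^*\in\mathbb R^{D_1\times\cdots\times D_N}$ and a set of observed entries $\Omega\subset[D_1]\times\cdots\times[D_N]$, defining the loss $\mathcal L(\mathcal W)=\frac1{|\Omega|}\sum_{(d_1,\dots,d_N)\in\Omega}(\mathcal W_{d_1,\dots,d_N}-\mathcal W^*_{d_1,\dots,d_N})^2$, such that for every mode tree $\mathcal T$ over $[N]$ the set $$\mathcal R_{\mathcal T}:=\big\{(\mathrm{rank}\,[\![\mathcal W;\nu]\!])_{\nu\in\mathcal T\setminus\{[N]\}}:\ \mathcal W\in\mathbb R^{D_1\times\cdots\times D_N},\ \mathcal L(\mathcal W)=0\big\}$$ contains elements $(R_\nu)_\nu$ and $(R'_\nu)_\nu$ such that: (i) there is no $(R''_\nu)_\nu\in\mathcal R_{\mathcal T}\setminus\{(R_\nu)_\nu,(R'_\nu)_\nu\}$ with $(R''_\nu)_\nu\le(R_\nu)_\nu$ or $(R''_\nu)_\nu\le(R'_\nu)_\nu$; and (ii) neither $(R_\nu)_\nu\le(R'_\nu)_\nu$ nor $(R'_\nu)_\nu\le(R_\nu)_\nu$. Here $\le$ is the entrywise (product) partial order on tuples indexed by $\mathcal T\setminus\{[N]\}$.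
   Context: $[K]:=\{1,\dots,K\}$. A mode tree $\mathcal T$ over $[N]$ is a rooted tree whose nodes are labeled by subsets of $[N]$, with exactly $N$ leaves labeled $\{1\},\dots,\{N\}$, and where each interior node's label is the union of its children's labels; nodes are identified with their labels (so $\mathcal T\subset 2^{[N]}$) and the root is $[N]$. The matricization $[\![\mathcal W;I]\!]$ of $\mathcal W\in\mathbb R^{D_1\times\cdots\times D_N}$ w.r.t. $I\subset[N]$ is its arrangement as a $\prod_{i\in I}D_i\times\prod_{j\notin I}D_j$ matrix whose rows are indexed by the modes in $I$ and columns by the remaining modes (entry $\mathcal W_{d_1,\dots,d_N}$ goes to row $1+\sum_l(d_{i_l}-1)\prod_{l'<l}D_{i_{l'}}$ and column $1+\sum_l(d_{j_l}-1)\prod_{l'<l}D_{j_{l'}}$, where $I=\{i_1<\cdots\}$, $[N]\setminus I=\{j_1<\cdots\}$). The tuple $(\mathrm{rank}\,[\![\mathcal W;\nu]\!])_{\nu\in\mathcal T\setminus\{[N]\}}$ is the hierarchical tensor rank of $\mathcal W$ w.r.t. $\mathcal T$. *)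

From HB Require Import structures.
From mathcomp Require Import all_boot all_order all_algebra.
From mathcomp Require Import Rstruct.
From Stdlib Require Rdefinitions.
Notation R := Rdefinitions.R.
Set Implicit Arguments. Unset Strict Implicit. Unset Printing Implicit Defensive.
Import Order.TTheory GRing.Theory Num.Theory.
Local Open Scope ring_scope.

(* Multi-indices (d_1,...,d_N) in [D_1] x ... x [D_N]; modes are 'I_N (0-based). *)
Definition idx (N : nat) (D : 'I_N -> nat) := {dffun forall i : 'I_N, 'I_(D i)}.

Definition tensor (N : nat) (D : 'I_N -> nat) := idx D -> R.

Definition rowidx N (D : 'I_N -> nat) (nu : {set 'I_N}) :=
  {dffun forall i : {i : 'I_N | i \in nu}, 'I_(D (val i))}.
Definition colidx N (D : 'I_N -> nat) (nu : {set 'I_N}) :=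
  {dffun forall i : {i : 'I_N | i \notin nu}, 'I_(D (val i))}.

Definition merge N (D : 'I_N -> nat) (nu : {set 'I_N})
  (r : rowidx D nu) (c : colidx D nu) : idx D :=
  [ffun i => (if i \in nu as b return ((i \in nu) = b -> 'I_(D i))
              then fun h => r (exist _ i h)
              else fun h => c (exist _ i (negbT h))) (erefl (i \in nu))].

(* The matricization [[W; nu]]: rows indexed by the modes in nu, columns by the
   remaining modes (rows/columns are listed in the enumeration order of the
   finite index types; this only permutes rows/columns w.r.t. the paper's
   ordering, so the rank is the same). *)
Definition matricization N (D : 'I_N -> nat) (W : tensor D) (nu : {set 'I_N}) :
  'M[R]_(#|{: rowidx D nu}|, #|{: colidx D nu}|) :=
  \matrix_(a, b) W (merge (enum_val a) (enum_val b)).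

Definition mrank N (D : 'I_N -> nat) (W : tensor D) (nu : {set 'I_N}) : nat :=
  \rank (matricization W nu).

Definition loss N (D : 'I_N -> nat) (Wstar : tensor D) (Omega : {set idx D})
  (W : tensor D) : R :=
  (#|Omega|%:R)^-1 * \sum_(d in Omega) (W d - Wstar d) ^+ 2.

(* Mode trees over [N]: a rooted tree whose nodes are identified with their
   labels (so the node set is a set T of subsets of [N]), given by a parent map
   par. *)
Definition children N (T : {set {set 'I_N}}) (par : {set 'I_N} -> {set 'I_N})
  (nu : {set 'I_N}) : {set {set 'I_N}} :=
  [set mu in T | (mu != setT) && (par mu == nu)].

Definition is_mode_tree N (T : {set {set 'I_N}}) (par : {set 'I_N} -> {set 'I_N}) : Prop :=
  [/\ setT \in T,
      (forall nu, nu \in T -> nu != setT -> par nu \in T) /\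
      (forall nu, nu \in T -> exists k, iter k par nu = setT),
      (forall nu, nu \in T -> (children T par nu == set0) = (#|nu| == 1%N)),
      (forall i : 'I_N, [set i] \in T) &
      (forall nu, nu \in T -> children T par nu != set0 ->
          nu = \bigcup_(mu in children T par nu) mu)].

Definition node N (T : {set {set 'I_N}}) := {nu : {set 'I_N} | nu \in T :\ setT}.

Definition htrank N (D : 'I_N -> nat) (T : {set {set 'I_N}}) (W : tensor D) :
  {ffun node T -> nat} := [ffun nu => mrank W (val nu)].

Definition in_RT N (D : 'I_N -> nat) (Wstar : tensor D) (Omega : {set idx D})
  (T : {set {set 'I_N}}) (t : {ffun node T -> nat}) : Prop :=
  exists W : tensor D, loss Wstar Omega W = 0 /\ htrank T W = t.

Definition tle N (T : {set {set 'I_N}}) (t t' : {ffun node T -> nat}) : Prop :=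
  forall nu, (t nu <= t' nu)%N.

From Pilot Require Import Defs.
From HB Require Import structures.
From mathcomp Require Import all_boot all_order all_algebra.
From mathcomp Require Import Rstruct.
Set Implicit Arguments. Unset Strict Implicit. Unset Printing Implicit Defensive.
Import Order.TTheory GRing.Theory Num.Theory.
Local Open Scope ring_scope.

(* Fix three modes a, b, c and observe only the 0/1 multi-indices 0, 1_{a,b,c}
   and 1_{c}, with values 1, 1 and 0.  The tensor G_{a,b,c} which is the
   all-ones vector at mode a, e_0 (x) e_0 + e_1 (x) e_1 at modes b, c and e_0
   elsewhere fits these observations, and its matricization along nu has rank 2
   if nu separates b from c and rank 1 otherwise; likewise for G_{b,a,c}, with
   a and b exchanged.  Conversely, let W fit the observations with rank <= 1
   along the leaf {a}.  The 2x2 minor on the indices 0, 1_{a} x 0, 1_{b,c}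
   gives W(1_{b,c}) <> 0, and when nu separates b from c the minor
   W(0) W(1_{b,c}) = W(1_b) W(1_c) would vanish, so the rank along nu is at
   least 2.  Hence the rank tuples of G_{a,b,c} and G_{b,a,c} are minimal in
   R_T, and they are incomparable at the leaves {a} and {b}. *)

Lemma mxrank_le1_cross (F : fieldType) m n (A : 'M[F]_(m, n)) : (\rank A <= 1)%N ->
  forall i1 i2 j1 j2, A i1 j1 * A i2 j2 = A i1 j2 * A i2 j1.
Proof.
move=> rA i1 i2 j1 j2; rewrite -(mulmx_base A) !mxE.
move: (col_base A) (row_base A) rA; case: (\rank A) => [|[|//]] C B _.
  by rewrite !big_ord0 !mul0r.
by rewrite !big_ord1 mulrACA [RHS]mulrACA [B 0 j2 * _]mulrC.
Qed.

Lemma mxrank_sum_outer_le (F : fieldType) m n K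
    (x : 'I_K -> 'I_m -> F) (y : 'I_K -> 'I_n -> F) :
  (\rank (\matrix_(i, j) \sum_k x k i * y k j)%R <= K)%N.
Proof.
have -> : \matrix_(i, j) \sum_k x k i * y k j =
    (\matrix_(i, k) x k i) *m (\matrix_(k, j) y k j).
  by apply/matrixP => i j; rewrite !mxE; apply: eq_bigr => k _; rewrite !mxE.
exact: leq_trans (mxrankM_maxl _ _) (rank_leq_col _).
Qed.

Lemma prodr_bool (S : comPzSemiRingType) (I : finType) (P : pred I) :
  \prod_i ((P i)%:R : S) = [forall i, P i]%:R.
Proof.
have [/forallP P_all | /forallPn [i nPi]] := boolP [forall i, P i].
  by apply: big1 => i _; rewrite P_all.
by rewrite (bigD1 i) //= (negbTE nPi) mul0r.
Qed.

Lemma loss_eq0 N (D : 'I_N -> nat) (Wstar W : tensor D) (Omega : {set idx D}) :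
  loss Wstar Omega W = 0 <-> {in Omega, W =1 Wstar}.
Proof.
rewrite /loss; split => [| WE]; last first.
  by rewrite big1 ?mulr0 // => d /WE ->; rewrite subrr expr0n.
move/eqP; rewrite mulf_eq0 invr_eq0 pnatr_eq0 => /orP[/eqP/card0_eq O0 d | /eqP sum0 d dO].
  by rewrite O0.
apply/eqP; rewrite -subr_eq0 -sqrf_eq0; apply/eqP.
by apply: (psumr_eq0P _ sum0) => // e _; apply: sqr_ge0.
Qed.

Section Matricization.
Variables (N : nat) (D : 'I_N -> nat) (nu : {set 'I_N}).
Implicit Types (W : tensor D) (p q : idx D) (r : rowidx D nu) (c : colidx D nu).

Definition rowpart p : rowidx D nu := [ffun s => p (val s)].
Definition colpart p : colidx D nu := [ffun s => p (val s)].
Definition mix p q : idx D := [ffun i => if i \in nu then p i else q i].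

Lemma merge_in r c i (h : i \in nu) : Defs.merge r c i = r (exist _ i h).
Proof.
rewrite /Defs.merge ffunE; move: (erefl (i \in nu)).
case: {2 3}(i \in nu) => e; first by rewrite (bool_irrelevance e h).
by exfalso; rewrite e in h.
Qed.

Lemma merge_out r c i (h : i \notin nu) : Defs.merge r c i = c (exist _ i h).
Proof.
rewrite /Defs.merge ffunE; move: (erefl (i \in nu)).
case: {2 3}(i \in nu) => e; first by exfalso; rewrite e in h.
by rewrite (bool_irrelevance (negbT e) h).
Qed.

Lemma merge_parts p q : Defs.merge (rowpart p) (colpart q) = mix p q.
Proof.
apply/ffunP => i; rewrite [RHS]ffunE.
by have [h|h] := boolP (i \in nu); rewrite ?(merge_in _ _ h) ?(merge_out _ _ h) ffunE.
Qed.

Lemma mix_id p : mix p p = p.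
Proof. by apply/ffunP => i; rewrite ffunE if_same. Qed.

Lemma matricization_parts W p q :
  matricization W nu (enum_rank (rowpart p)) (enum_rank (colpart q)) = W (mix p q).
Proof. by rewrite mxE !enum_rankK merge_parts. Qed.

Lemma mrank_gt0 W p : W p != 0 -> (0 < mrank W nu)%N.
Proof.
move=> Wp; rewrite lt0n mxrank_eq0; apply: contraNneq Wp.
move/matrixP/(_ (enum_rank (rowpart p)) (enum_rank (colpart p))).
by rewrite matricization_parts mix_id mxE => /eqP.
Qed.

Lemma mrank_le1_cross W p p' q q' : (mrank W nu <= 1)%N ->
  W (mix p q) * W (mix p' q') = W (mix p q') * W (mix p' q).
Proof.
move/mxrank_le1_cross/(_ (enum_rank (rowpart p)) (enum_rank (rowpart p'))).
by move/(_ (enum_rank (colpart q)) (enum_rank (colpart q'))); rewrite !matricization_parts.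
Qed.

Lemma mrank_le_sum_outer W K (x : 'I_K -> rowidx D nu -> R) (y : 'I_K -> colidx D nu -> R) :
  (forall r c, W (Defs.merge r c) = \sum_k x k r * y k c) -> (mrank W nu <= K)%N.
Proof.
move=> Wrc; rewrite /mrank.
have -> : matricization W nu = \matrix_(a, b) \sum_k x k (enum_val a) * y k (enum_val b).
  by apply/matrixP => a b; rewrite !mxE Wrc.
exact: mxrank_sum_outer_le.
Qed.

End Matricization.

Section CPTensors.
Variables (N : nat) (D : 'I_N -> nat) (K : nat).
Variable f : 'I_K -> forall i : 'I_N, 'I_(D i) -> R.
Arguments f : clear implicits.

Definition cp_tensor : tensor D := fun d => \sum_k \prod_(i : 'I_N) f k i (d i).

Variable nu : {set 'I_N}.

Definition rowfactor k (r : rowidx D nu) : R := \prod_(s : {i | i \in nu}) f k (val s) (r s).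
Definition colfactor k (c : colidx D nu) : R := \prod_(s : {i | i \notin nu}) f k (val s) (c s).

Lemma cp_tensor_merge r c :
  cp_tensor (Defs.merge r c) = \sum_k rowfactor k r * colfactor k c.
Proof.
apply: eq_bigr => k _; rewrite (bigID (mem nu)) /= big_sub (big_sub [predC nu]).
by congr (_ * _); apply: eq_bigr => -[i h] _; rewrite ?(merge_in _ _ h) ?(merge_out _ _ h).
Qed.

Lemma mrank_cp_tensor : (mrank cp_tensor nu <= K)%N.
Proof. exact: mrank_le_sum_outer cp_tensor_merge. Qed.

Lemma mrank_cp_tensor_le1 k0 :
  (forall k i, i \in nu -> f k i =1 f k0 i) \/ (forall k i, i \notin nu -> f k i =1 f k0 i) ->
  (mrank cp_tensor nu <= 1)%N.
Proof.
case=> fE.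
- have rowE k : rowfactor k =1 rowfactor k0.
    by move=> r; apply: eq_bigr => -[i h] _; rewrite fE.
  apply: (mrank_le_sum_outer (x := fun _ => rowfactor k0)
            (y := fun _ c => \sum_k colfactor k c)) => r c.
  by rewrite cp_tensor_merge big_ord1 mulr_sumr; apply: eq_bigr => k _; rewrite rowE.
- have colE k : colfactor k =1 colfactor k0.
    by move=> c; apply: eq_bigr => -[i h] _; rewrite fE.
  apply: (mrank_le_sum_outer (x := fun _ r => \sum_k rowfactor k r)
            (y := fun _ => colfactor k0)) => r c.
  by rewrite cp_tensor_merge big_ord1 mulr_suml; apply: eq_bigr => k _; rewrite colE.
Qed.

End CPTensors.

Section BinaryIndices.
Variables (N : nat) (D : 'I_N -> nat) (hD : forall i, (1 < D i)%N).
Implicit Types (W : tensor D) (nu S : {set 'I_N}).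

Definition idx_set S : idx D :=
  [ffun i => if i \in S then Ordinal (hD i) else Ordinal (ltnW (hD i))].

Lemma idx_setE S i : idx_set S i = (i \in S) :> nat.
Proof. by rewrite ffunE; case: (i \in S). Qed.

Lemma mix_idx_set nu S S' :
  mix nu (idx_set S) (idx_set S') = idx_set (S :&: nu :|: S' :\: nu).
Proof.
apply/ffunP => i; rewrite !ffunE !inE.
by case: (i \in nu); rewrite ?andbT ?andbF ?orbF.
Qed.

Lemma pair_setI_notin (b c : 'I_N) (A : {set 'I_N}) :
  b \notin A -> c \in A -> [set b; c] :&: A = [set c].
Proof.
move=> bA cA; apply/setP => i; rewrite !inE.
case: (eqVneq i c) => [->|_]; first by rewrite orbT cA.
by rewrite orbF; case: (eqVneq i b) => [->|//]; rewrite (negbTE bA).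
Qed.

Lemma mrank_gt1 W nu (b c : 'I_N) : (b \in nu) != (c \in nu) ->
  W (idx_set set0) != 0 -> W (idx_set [set b; c]) != 0 -> W (idx_set [set c]) = 0 ->
  (1 < mrank W nu)%N.
Proof.
move=> sep W0 Wbc Wc; rewrite ltnNge; apply: contraL Wbc => /mrank_le1_cross cross.
have := cross (idx_set set0) (idx_set [set b; c]) (idx_set set0) (idx_set [set b; c]).
rewrite !mix_idx_set set0I set0D !setU0 set0U setID setDE.
have [cnu|cnu] := boolP (c \in nu).
- have bnu : b \notin nu by move: sep; rewrite cnu; case: (b \in nu).
  by rewrite (pair_setI_notin bnu cnu) Wc mulr0 => /eqP; rewrite mulf_eq0 (negbTE W0) negbK.
- have bnu : b \notin ~: nu by move: sep; rewrite inE (negbTE cnu); case: (b \in nu).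
  rewrite (pair_setI_notin bnu) ?inE // Wc mul0r => /eqP.
  by rewrite mulf_eq0 (negbTE W0) negbK.
Qed.

Definition cut_rank (b c : 'I_N) nu : nat := ((b \in nu) != (c \in nu)).+1.

Definition omega (a b c : 'I_N) : {set idx D} :=
  [set idx_set set0; idx_set [set a; b; c]; idx_set [set c]].

Definition fits (a b c : 'I_N) W :=
  [/\ W (idx_set set0) = 1, W (idx_set [set a; b; c]) = 1 & W (idx_set [set c]) = 0].

Lemma fitsC a b c W : fits a b c W <-> fits b a c W.
Proof. by rewrite /fits (setUC [set a]). Qed.

Lemma loss_omega_eq0 a b c (Wstar W : tensor D) : fits a b c Wstar ->
  loss Wstar (omega a b c) W = 0 <-> fits a b c W.
Proof.
case=> s0 s1 s2; rewrite loss_eq0; split => [WE | [w0 w1 w2] d].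
  by split; rewrite WE ?s0 ?s1 ?s2 // !inE eqxx ?orbT.
by rewrite !inE => /orP[/orP[|]|] /eqP->; rewrite ?s0 ?s1 ?s2.
Qed.

Definition cut_tuple (T : {set {set 'I_N}}) (b c : 'I_N) : {ffun node T -> nat} :=
  [ffun nu => cut_rank b c (val nu)].

Section ThreeModes.
Variables (a b c : 'I_N) (ab : a != b) (ac : a != c) (bc : b != c).

Lemma fits_pair_neq0 W : fits a b c W -> (mrank W [set a] <= 1)%N ->
  W (idx_set [set b; c]) != 0.
Proof.
case=> W0 Wabc _ /mrank_le1_cross cross.
have := cross (idx_set set0) (idx_set [set a]) (idx_set set0) (idx_set [set b; c]).
have bc_a : [set b; c] :\: [set a] = [set b; c].
  by apply/setDidPl; rewrite disjoint_sym disjoints1 !inE negb_or ab.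
rewrite !mix_idx_set set0I set0D !setU0 set0U setIid bc_a setUA W0 Wabc mul1r.
by move/esym/eqP; apply: contraTneq => ->; rewrite mul0r eq_sym oner_eq0.
Qed.

Lemma fits_mrank_ge W nu : fits a b c W -> (mrank W [set a] <= 1)%N ->
  (cut_rank b c nu <= mrank W nu)%N.
Proof.
move=> Wfit Wa; have [W0 _ Wc] := Wfit.
have W0_neq0 : W (idx_set set0) != 0 by rewrite W0 oner_eq0.
rewrite /cut_rank; case: (boolP ((b \in nu) != (c \in nu))) => [sep | _].
  exact: mrank_gt1 sep W0_neq0 (fits_pair_neq0 Wfit Wa) Wc.
exact: mrank_gt0 W0_neq0.
Qed.

(* (ghz_bit k i)%:R is the mode-i factor of the k-th term of G_{a,b,c}: the
   all-ones vector at a, e_k at b and c, and e_0 elsewhere. *)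
Definition ghz_bit (k : 'I_2) (i : 'I_N) (x : nat) : bool :=
  (i == a) || (x == if (i == b) || (i == c) then k : nat else 0%N).

Definition ghz : tensor D := cp_tensor (fun k i x => (ghz_bit k i x)%:R).

Lemma ghz_idx_set S :
  ghz (idx_set S) = [forall i, ghz_bit 0 i (i \in S)]%:R + [forall i, ghz_bit 1 i (i \in S)]%:R.
Proof.
rewrite /ghz /cp_tensor big_ord_recl big_ord1.
by congr (_ + _); rewrite -prodr_bool; apply: eq_bigr => i _; rewrite idx_setE.
Qed.

Lemma fits_ghz : fits a b c ghz.
Proof.
split; rewrite ghz_idx_set.
- have -> : [forall i, ghz_bit 0 i (i \in set0)].
    by apply/forallP => i; rewrite /ghz_bit inE /= if_same orbT.
  have -> : [forall i, ghz_bit 1 i (i \in set0)] = false.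
    by apply/forallPn; exists c; rewrite /ghz_bit inE eq_sym (negbTE ac) eqxx orbT.
  by rewrite addr0.
- have -> : [forall i, ghz_bit 0 i (i \in [set a; b; c])] = false.
    by apply/forallPn; exists c; rewrite /ghz_bit !inE eq_sym (negbTE ac) eqxx !orbT.
  have -> : [forall i, ghz_bit 1 i (i \in [set a; b; c])].
    by apply/forallP => i; rewrite /ghz_bit !inE; case: (eqVneq i a) => //= _.
  by rewrite add0r.
- have -> : [forall i, ghz_bit 0 i (i \in [set c])] = false.
    by apply/forallPn; exists c; rewrite /ghz_bit !inE eq_sym (negbTE ac) eqxx !orbT.
  have -> : [forall i, ghz_bit 1 i (i \in [set c])] = false.
    by apply/forallPn; exists b; rewrite /ghz_bit !inE eq_sym (negbTE ab) eqxx (negbTE bc).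
  by rewrite addr0.
Qed.

Lemma mrank_ghz nu : mrank ghz nu = cut_rank b c nu.
Proof.
have factor_indep k i : i != b -> i != c -> ghz_bit k i =1 ghz_bit 0 i.
  by move=> ib ic x; rewrite /ghz_bit (negbTE ib) (negbTE ic).
have ghz_a : (mrank ghz [set a] <= 1)%N.
  apply: (mrank_cp_tensor_le1 (k0 := 0)); left => k i; rewrite inE => /eqP-> x.
  by rewrite /ghz_bit !eqxx.
apply/eqP; rewrite eqn_leq (fits_mrank_ge nu fits_ghz ghz_a) andbT /cut_rank.
case: (boolP ((b \in nu) != (c \in nu))) => [_ | /negPn/eqP bc_nu].
  exact: mrank_cp_tensor.
apply: (mrank_cp_tensor_le1 (k0 := 0)).
have [c_nu | c_nu] := boolP (c \in nu); [right | left] => k i i_nu x;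
  rewrite factor_indep //; apply/eqP => ei; move: c_nu i_nu; rewrite ei ?bc_nu;
  by case: (c \in nu).
Qed.

Lemma htrank_ghz T : htrank T ghz = cut_tuple T b c.
Proof. by apply/ffunP => nu; rewrite !ffunE mrank_ghz. Qed.

Lemma htrank_le_cut_tuple T W : [set a] \in T :\ setT -> fits a b c W ->
  tle (htrank T W) (cut_tuple T b c) -> htrank T W = cut_tuple T b c.
Proof.
move=> aT Wfit le_cut; have := le_cut (exist _ [set a] aT).
rewrite !ffunE /= /cut_rank !inE !(eq_sym _ a) (negbTE ab) (negbTE ac) => Wa.
apply/ffunP => nu; apply/eqP; rewrite eqn_leq le_cut.
by have := fits_mrank_ge (val nu) Wfit Wa; rewrite !ffunE.
Qed.

Lemma cut_tuple_not_le T :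
  [set b] \in T :\ setT -> ~ tle (cut_tuple T b c) (cut_tuple T a c).
Proof.
move=> bT /(_ (exist _ [set b] bT)); rewrite !ffunE /= /cut_rank !inE eqxx.
by rewrite (negbTE ab) (eq_sym c) (negbTE bc).
Qed.

End ThreeModes.
End BinaryIndices.

Theorem proposition2 (N : nat) (D : 'I_N -> nat) :
  (3 <= N)%N -> (forall i, (2 <= D i)%N) ->
  exists (Wstar : tensor D) (Omega : {set idx D}),
    forall (T : {set {set 'I_N}}) (par : {set 'I_N} -> {set 'I_N}),
      is_mode_tree T par ->
      exists R1 R2 : {ffun node T -> nat},
        [/\ in_RT Wstar Omega R1, in_RT Wstar Omega R2,
            (forall R3, in_RT Wstar Omega R3 -> R3 <> R1 -> R3 <> R2 ->
               ~ (tle R3 R1 \/ tle R3 R2)),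
            ~ tle R1 R2 & ~ tle R2 R1].
Proof.
move=> N_ge3 D_ge2.
pose a : 'I_N := Ordinal (ltnW (ltnW N_ge3)).
pose b : 'I_N := Ordinal (ltnW N_ge3).
pose c : 'I_N := Ordinal N_ge3.
have [ab ba ac bc] : [/\ a != b, b != a, a != c & b != c] by [].
exists (ghz (D := D) a b c), (omega D_ge2 a b c) => T par [_ _ _ singleton_node _].
have node1 i : [set i] \in T :\ setT.
  rewrite !inE singleton_node andbT; apply/eqP => i_full.
  have := cardsT 'I_N; rewrite -i_full cards1 card_ord => N1.
  by have := N_ge3; rewrite -N1.
have solP W : loss (ghz a b c) (omega D_ge2 a b c) W = 0 <-> fits D_ge2 a b c W.
  exact: loss_omega_eq0 (fits_ghz D_ge2 ab ac bc).
exists (cut_tuple T b c), (cut_tuple T a c); split.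
- exists (ghz a b c); split; first exact/solP/fits_ghz.
  exact: htrank_ghz.
- exists (ghz b a c); split; first exact/solP/fitsC/fits_ghz.
  exact: htrank_ghz.
- move=> _ [W [/solP Wfit <-]] ne1 ne2 [le1 | le2].
    exact: ne1 (htrank_le_cut_tuple ab ac (node1 a) Wfit le1).
  by apply/ne2/(htrank_le_cut_tuple ba bc (node1 b) _ le2); rewrite -fitsC.
- exact: (cut_tuple_not_le ab bc (node1 b)).
- exact: (cut_tuple_not_le ba ac (node1 a)).
Qed.
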